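(* Let $P$ be a partial order with bottom element, $T=\{1_\sigma:\sigma\in P\}$, $\hat T$ a Kripke subset of $T$, and $\hat T_0$ as below. Then $\hat T_0$ is a (Kripke) ordinal and $L_{\hat T_0}=\hat T_0$.
   Context: Kripke sets over a partial order $P$ are evaluated with standard Kripke semantics for set theory. For $\sigma\in P$, $1_\sigma$ is the Kripke set with $(1_\sigma)_\tau=\emptyset$ if $\tau\le\sigma$ and $(1_\sigma)_\tau=\{\emptyset\}$ if $\sigma<\tau$ or $\sigma\perp\tau$ (incompatible), with the only possible transition maps. A Kripke subset $\hat T$ of $T$ assigns to each node $\sigma$ a set $\hat T_\sigma\subseteq T$, increasing in $\sigma$, with identity transition maps. $\hat T_0$ is the Kripke set with $(\hat T_0)_\sigma=\hat T_\sigma\cup\{0\}$. An ordinal is a transitive set of transitive sets. $\mathrm{def}(X)$ is the set of subsets of $X$ definable over $X$ (first-order, parameters from $X$, truth evaluated in $X$, in the Kripke sense), and $L_\alpha=\bigcup_{\beta\in\alpha}\mathrm{def}(L_\beta)$. *)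

From Stdlib Require Import List.
Import ListNotations.


Section Kripke.
Variable P : Type.
Variable le : P -> P -> Prop.

(* Transition maps are the identity (elements persist upward),
   which is the case for every Kripke set occurring in the statement. *)
Inductive KSet : Type :=
  KS (I : Type) (el : I -> KSet) (pres : I -> P -> Prop).

Definition idx (X : KSet) : Type := let (I, _, _) := X in I.
Definition elt (X : KSet) : idx X -> KSet :=
  match X as X0 return idx X0 -> KSet with KS _ f _ => f end.
Definition presR (X : KSet) : idx X -> P -> Prop :=
  match X as X0 return idx X0 -> P -> Prop with KS _ _ d => d end.

(* X_sigma : element i is in X_sigma iff present at some node below sigma
   (so X_sigma is automatically increasing in sigma). *)
Definition inAt (X : KSet) (i : idx X) (s : P) : Prop :=
  exists r, le r s /\ presR X i r.

Definition K0 : KSet := KS Empty_set (@Empty_set_rect (fun _ => KSet)) (fun _ _ => False).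

Fixpoint keq (x y : KSet) (s : P) {struct x} : Prop :=
  match x, y with
  | KS Ix f d, KS Jx g e =>
      forall t, le s t ->
        (forall i, (exists r, le r t /\ d i r) ->
           exists j, (exists r, le r t /\ e j r) /\ keq (f i) (g j) t) /\
        (forall j, (exists r, le r t /\ e j r) ->
           exists i, (exists r, le r t /\ d i r) /\ keq (f i) (g j) t)
  end.

Definition kin (s : P) (x Y : KSet) : Prop :=
  exists j, inAt Y j s /\ keq x (elt Y j) s.

(* first-order formulas of set theory, de Bruijn variables *)
Inductive form : Type :=
| fmem : nat -> nat -> form
| feq : nat -> nat -> form
| fbot : form
| fand : form -> form -> form
| forr : form -> form -> form
| fimp : form -> form -> form
| fall : form -> form
| fex : form -> form.

Fixpoint bnd (n : nat) (f : form) : Prop :=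
  match f with
  | fmem a b | feq a b => a < n /\ b < n
  | fbot => True
  | fand f1 f2 | forr f1 f2 | fimp f1 f2 => bnd n f1 /\ bnd n f2
  | fall f1 | fex f1 => bnd (S n) f1
  end.

(* Kripke forcing, quantifiers ranging over the domain D (D t = the
   elements of the domain at node t). *)
Fixpoint force (D : P -> KSet -> Prop) (f : form) (e : list KSet) (s : P)
  : Prop :=
  match f with
  | fmem a b => kin s (nth a e K0) (nth b e K0)
  | feq a b => keq (nth a e K0) (nth b e K0) s
  | fbot => False
  | fand f1 f2 => force D f1 e s /\ force D f2 e s
  | forr f1 f2 => force D f1 e s \/ force D f2 e s
  | fimp f1 f2 => forall t, le s t -> force D f1 e t -> force D f2 e t
  | fall f1 => forall t, le s t -> forall x, D t x -> force D f1 (x :: e) t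
  | fex f1 => exists x, D s x /\ force D f1 (x :: e) s
  end.

Definition Vdom : P -> KSet -> Prop := fun _ _ => True.
Definition domOf (X : KSet) : P -> KSet -> Prop :=
  fun t x => exists i, inAt X i t /\ x = elt X i.

(* "x is transitive" for x = variable k *)
Definition fTrans (k : nat) : form :=
  fall (fimp (fmem 0 (S k)) (fall (fimp (fmem 0 1) (fmem 0 (S (S k)))))).
(* Ord(x) for x = variable 0: a transitive set of transitive sets *)
Definition fOrd : form := fand (fTrans 0) (fall (fimp (fmem 0 1) (fTrans 0))).

Definition isKOrdinal (X : KSet) : Prop := forall s, force Vdom fOrd [X] s.

(* def(X): at node s, the subsets {x in X | X |= phi(x, p)} with phi a
   formula whose free variables are among x, p_1..p_n and p_i in X_s. *)
Definition defSub (X : KSet) (f : form) (ps : list (idx X)) : KSet :=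
  KS (idx X) (elt X) (fun i t => inAt X i t /\
                         force (domOf X) f (elt X i :: map (elt X) ps) t).

Definition kdef (X : KSet) : KSet :=
  KS (form * list (idx X)) (fun q : form * list (idx X) => defSub X (fst q) (snd q))
     (fun q s => bnd (S (length (snd q))) (fst q) /\
                 Forall (fun p => inAt X p s) (snd q)).

(* L_alpha = union over beta in alpha of def(L_beta) *)
Fixpoint KL (a : KSet) : KSet :=
  match a with
  | KS Ix f d =>
      KS {i : Ix & idx (kdef (KL (f i)))} (fun q : {i : Ix & idx (kdef (KL (f i)))} =>
            elt (kdef (KL (f (projT1 q)))) (projT2 q))
         (fun q s => (exists r, le r s /\ d (projT1 q) r) /\
                     inAt (kdef (KL (f (projT1 q)))) (projT2 q) s)
  end.

(* 1_rho: empty at nodes t <= rho, {0} elsewhere *)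
Definition one (rho : P) : KSet := KS unit (fun _ : unit => K0) (fun _ t => ~ le t rho).

(* hat T_0 for a Kripke subset hat T of T = {1_rho}, given as the predicate
   Th s rho  <->  1_rho in hat T_s *)
Definition That0 (Th : P -> P -> Prop) : KSet :=
  KS (option P) (fun o : option P => match o with None => K0 | Some r => one r end)
     (fun o s => match o with None => True | Some r => Th s r end).

End Kripke.

(* Every element of [That0 Th] is [0] or some [1_r], and both have only
   empty elements; so the elements of [That0 Th] are transitive and forced
   empty below their members, which makes [That0 Th] an ordinal.  For the
   second part, [L] of [1_r] is again (equivalent to) [1_r], and forcing over
   the structure [1_r] does not depend on the assignment or on the node,
   since all its elements are empty: each definable subset of [1_r] is
   therefore [1_r] itself or [0]. *)

From Pilot Require Import Defs.
From Stdlib Require Import List Classical.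

Section KripkeOrdinal.

Variable P : Type.
Variable le : P -> P -> Prop.
Hypothesis le_refl : forall s, le s s.
Hypothesis le_trans : forall s t u, le s t -> le t u -> le s u.

Local Notation KSet := (Defs.KSet P).
Local Notation keq := (Defs.keq P le).
Local Notation kin := (Defs.kin P le).
Local Notation idx := (Defs.idx P).
Local Notation elt := (Defs.elt P).
Local Notation inAt := (Defs.inAt P le).
Local Notation K0 := (Defs.K0 P).
Local Notation one := (Defs.one P le).
Local Notation KL := (Defs.KL P le).
Local Notation That0 := (Defs.That0 P le).
Local Notation force := (Defs.force P le).
Local Notation domOf := (Defs.domOf P le).
Local Notation defSub := (Defs.defSub P le).
Local Notation kdef := (Defs.kdef P le).

Lemma keq_intro (a b : KSet) s :
  (forall t, le s t ->
    (forall i, inAt a i t -> exists j, inAt b j t /\ keq (elt a i) (elt b j) t) /\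
    (forall j, inAt b j t -> exists i, inAt a i t /\ keq (elt a i) (elt b j) t)) ->
  keq a b s.
Proof. destruct a, b; exact (fun H => H). Qed.

Lemma keq_elim (a b : KSet) s t i :
  keq a b s -> le s t -> inAt a i t ->
  exists j, inAt b j t /\ keq (elt a i) (elt b j) t.
Proof. destruct a, b; intros H Hst Hi; exact (proj1 (H t Hst) i Hi). Qed.

Definition empty_idx (x : KSet) : Prop := idx x -> False.

Lemma keq_empty_idx (a b : KSet) s : empty_idx a -> empty_idx b -> keq a b s.
Proof.
  intros Ha Hb; apply keq_intro; intros t _.
  split; intros i _; [destruct (Ha i) | destruct (Hb i)].
Qed.

Lemma kin_empty_idx s (x y : KSet) : empty_idx y -> ~ kin s x y.
Proof. intros Hy [j _]; exact (Hy j). Qed.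

Lemma nth_empty_idx (e : list KSet) n :
  Forall empty_idx e -> empty_idx (nth n e K0).
Proof. intros He; revert n; induction He; intros [|n]; simpl; auto; intros []. Qed.

Lemma K0_empty_idx : empty_idx K0.
Proof. intros []. Qed.

Definition forced_empty (x : KSet) s : Prop :=
  forall t, le s t -> forall i, ~ inAt x i t.

Lemma forced_empty_keq (a b : KSet) s :
  keq a b s -> forced_empty b s -> forced_empty a s.
Proof.
  intros Hab Hb t Hst i Hi.
  destruct (keq_elim a b s t i Hab Hst Hi) as [j [Hj _]]; exact (Hb t Hst j Hj).
Qed.

Lemma empty_idx_forced_empty (x : KSet) s : empty_idx x -> forced_empty x s.
Proof. intros Hx t _ i; destruct (Hx i). Qed.

Lemma keq_forced_empty (a b : KSet) s :
  forced_empty a s -> forced_empty b s -> keq a b s.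
Proof.
  intros Ha Hb; apply keq_intro; intros t Hst.
  split; intros i Hi; [destruct (Ha t Hst i Hi) | destruct (Hb t Hst i Hi)].
Qed.

Lemma That0_elt_elt (Th : P -> P -> Prop) j k :
  elt (elt (That0 Th) j) k = K0.
Proof. destruct j; [reflexivity | destruct k]. Qed.

Lemma forced_empty_in_That0 (Th : P -> P -> Prop) (x y : KSet) j s t :
  keq y (elt (That0 Th) j) s -> le s t -> kin t x y -> forced_empty x t.
Proof.
  intros Hy Hst [i [Hi Hx]].
  destruct (keq_elim _ _ s t i Hy Hst Hi) as [k [_ Hk]].
  rewrite That0_elt_elt in Hk.
  apply (forced_empty_keq _ _ _ Hx), (forced_empty_keq _ _ _ Hk).
  apply empty_idx_forced_empty, K0_empty_idx.
Qed.

Lemma That0_ordinal (Th : P -> P -> Prop) : isKOrdinal P le (That0 Th).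
Proof.
  intro s; split.
  - intros t1 _ y _ t2 Ht12 [j [_ Hy]] t3 Ht23 x _ t4 Ht34 Hxy.
    assert (Hx : forced_empty x t4)
      by exact (forced_empty_in_That0 Th x y j t2 t4 Hy
                  (le_trans _ _ _ Ht23 Ht34) Hxy).
    exists None; split.
    + exists t4; split; [apply le_refl | exact I].
    + apply keq_forced_empty; [exact Hx |].
      apply empty_idx_forced_empty, K0_empty_idx.
  - intros t1 _ y _ t2 Ht12 [j [_ Hy]] t3 Ht23 x _ t4 Ht34 Hxy
      t5 Ht45 z _ t6 Ht56 [i [Hi _]].
    destruct (forced_empty_in_That0 Th x y j t2 t4 Hy (le_trans _ _ _ Ht23 Ht34) Hxy
                t6 (le_trans _ _ _ Ht45 Ht56) i Hi).
Qed.

Section LOne.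

Variable r : P.

Local Notation L1 := (KL (one r)).

Lemma L1_elt_empty_idx k : empty_idx (elt L1 k).
Proof. destruct k as [u q]; intros [[] _]. Qed.

Lemma L1_inAt_not_le k t : inAt L1 k t -> ~ le t r.
Proof. intros [t1 [Ht1 [[t2 [Ht2 Hnot]] _]]] Htr; eauto. Qed.

Definition L1_witness : idx L1 := existT _ tt (fbot, nil).

Lemma L1_witness_inAt t : ~ le t r -> inAt L1 L1_witness t.
Proof.
  intro Htr; exists t; split; [apply le_refl |].
  split; [exists t; auto |].
  exists t; split; [apply le_refl | simpl; auto].
Qed.

Lemma domOf_L1_empty_idx t x : domOf L1 t x -> empty_idx x.
Proof. intros [i [_ ->]]; apply L1_elt_empty_idx. Qed.

(* At nodes [t] with [~ le t r] the domain is [{0}] and every variable denotes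
   an empty set, so atomic formulas have fixed truth values and quantifiers
   range over one element up to equality. *)
Lemma force_L1_invariant f : forall e e' t t',
  Forall empty_idx e -> Forall empty_idx e' -> ~ le t r -> ~ le t' r ->
  force (domOf L1) f e t -> force (domOf L1) f e' t'.
Proof.
  assert (Hup : forall t u, le t u -> ~ le t r -> ~ le u r) by eauto.
  assert (Hw : forall t, ~ le t r -> domOf L1 t (elt L1 L1_witness))
    by (intros t Ht; exists L1_witness; split; [apply L1_witness_inAt |]; auto).
  induction f as [a b|a b| |f1 IH1 f2 IH2|f1 IH1 f2 IH2|f1 IH1 f2 IH2|f IH|f IH];
    intros e e' t t' He He' Ht Ht'; simpl.
  - intro H; destruct (kin_empty_idx _ _ _ (nth_empty_idx e b He) H).
  - intros _; apply keq_empty_idx; apply nth_empty_idx; assumption.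
  - trivial.
  - intros [H1 H2]; split; [apply (IH1 e e' t) | apply (IH2 e e' t)]; auto.
  - intros [H1 | H2]; [left; apply (IH1 e e' t) | right; apply (IH2 e e' t)]; auto.
  - intros H u Hu H1.
    assert (Hu' : ~ le u r) by eauto.
    apply (IH2 e e' t); auto.
    apply H; [apply le_refl |]; apply (IH1 e' e u); eauto.
  - intros H u Hu x Hx.
    apply (IH (elt L1 L1_witness :: e) (x :: e') t); eauto.
    + constructor; [apply L1_elt_empty_idx | assumption].
    + constructor; [eapply domOf_L1_empty_idx; eauto | assumption].
  - intros [x [Hx H]]; exists (elt L1 L1_witness); split; [auto |].
    apply (IH (x :: e) _ t); auto; constructor; auto.
    + eapply domOf_L1_empty_idx; eauto.
    + apply L1_elt_empty_idx.
Qed.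

Lemma L1_env_empty_idx (ps : list (idx L1)) k :
  Forall empty_idx (elt L1 k :: map (elt L1) ps).
Proof.
  constructor; [apply L1_elt_empty_idx |].
  apply Forall_forall; intros x Hx.
  apply in_map_iff in Hx as [k' [<- _]]; apply L1_elt_empty_idx.
Qed.

Lemma defSub_L1_full f ps t :
  (forall t', ~ le t' r ->
     force (domOf L1) f (elt L1 L1_witness :: map (elt L1) ps) t') ->
  keq (defSub L1 f ps) (one r) t.
Proof.
  intros Hf; apply keq_intro; intros t' _; split.
  - intros i [t2 [Ht2 [Hi _]]]; exists tt; split.
    + exists t2; split; [exact Ht2 | exact (L1_inAt_not_le i t2 Hi)].
    + apply keq_empty_idx; [apply L1_elt_empty_idx | intros []].
  - intros [] [t3 [Ht3 Hnot]].
    assert (Ht' : ~ le t' r) by eauto.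
    exists L1_witness; split.
    + exists t'; split; [apply le_refl |].
      split; [apply L1_witness_inAt | apply Hf]; exact Ht'.
    + apply keq_empty_idx; [apply L1_elt_empty_idx | intros []].
Qed.

Lemma defSub_L1_empty f ps t :
  ~ (exists t0 k0, inAt L1 k0 t0 /\
       force (domOf L1) f (elt L1 k0 :: map (elt L1) ps) t0) ->
  keq (defSub L1 f ps) K0 t.
Proof.
  intros Hnone; apply keq_forced_empty.
  - intros t' _ i [t2 [_ [Hi Hf]]]; apply Hnone; exists t2, i; auto.
  - apply empty_idx_forced_empty, K0_empty_idx.
Qed.

End LOne.

Lemma KL_K0_elt_empty_idx q : empty_idx (elt (kdef (KL K0)) q).
Proof. intros [[] _]. Qed.

Lemma KL_That0_sub (Th : P -> P -> Prop) t q :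
  inAt (KL (That0 Th)) q t ->
  exists j, inAt (That0 Th) j t /\ keq (elt (KL (That0 Th)) q) (elt (That0 Th) j) t.
Proof.
  destruct q as [[r|] [f ps]].
  - change (list (idx (KL (one r)))) in ps.
    intros [t0 [Ht0 [[t1 [Ht1 HTh]] _]]].
    destruct (classic (exists t2 k, inAt (KL (one r)) k t2 /\
      force (domOf (KL (one r))) f (elt (KL (one r)) k :: map (elt (KL (one r))) ps) t2))
      as [[t2 [k [Hk Hf]]] | Hnone].
    + exists (Some r); split; [exists t1; eauto |].
      apply defSub_L1_full; intros t' Ht'.
      apply (force_L1_invariant r f _ _ t2 t' (L1_env_empty_idx r ps k)
               (L1_env_empty_idx r ps (L1_witness r))); auto.
      exact (L1_inAt_not_le r k t2 Hk).
    + exists None; split; [exists t; split; [apply le_refl | exact I] |].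
      exact (defSub_L1_empty r f ps t Hnone).
  - intros _; exists None; split; [exists t; split; [apply le_refl | exact I] |].
    apply keq_empty_idx; [apply KL_K0_elt_empty_idx | apply K0_empty_idx].
Qed.

Lemma That0_sub_KL (Th : P -> P -> Prop) t j :
  inAt (That0 Th) j t ->
  exists q, inAt (KL (That0 Th)) q t /\ keq (elt (KL (That0 Th)) q) (elt (That0 Th) j) t.
Proof.
  destruct j as [r|]; intros [t1 [Ht1 HTh]].
  - (* [1_r] is defined over [L 1_r] by a formula forced everywhere *)
    exists (existT _ (Some r) (fimp fbot fbot, nil)); split.
    + exists t; split; [apply le_refl |].
      split; [exists t1; auto |].
      exists t; split; [apply le_refl | simpl; auto].
    + apply defSub_L1_full; simpl; auto.
  - exists (existT _ None (fbot, nil)); split.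
    + exists t; split; [apply le_refl |].
      split; [exists t; split; [apply le_refl | exact I] |].
      exists t; split; [apply le_refl | simpl; auto].
    + apply keq_empty_idx; [apply KL_K0_elt_empty_idx | apply K0_empty_idx].
Qed.

Lemma KL_That0_keq (Th : P -> P -> Prop) s : keq (KL (That0 Th)) (That0 Th) s.
Proof.
  apply keq_intro; intros t _; split; [apply KL_That0_sub | apply That0_sub_KL].
Qed.

End KripkeOrdinal.

Theorem mainTheorem10 (P : Type) (le : P -> P -> Prop) (bot : P)
  (le_refl : forall s, le s s)
  (le_trans : forall s t u, le s t -> le t u -> le s u)
  (le_antisym : forall s t, le s t -> le t s -> s = t)
  (bot_least : forall s, le bot s)
  (Th : P -> P -> Prop)
  (Th_incr : forall s t r, le s t -> Th s r -> Th t r) :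
  isKOrdinal P le (That0 P le Th) /\
  (forall s, keq P le (KL P le (That0 P le Th)) (That0 P le Th) s).
Proof.
  split.
  - exact (That0_ordinal P le le_refl le_trans Th).
  - exact (KL_That0_keq P le le_refl le_trans Th).
Qed.
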